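(* For all positive integers $\ell$ and $n$, $\mathrm{IR}(K_{1,\ell}, K_{1,n}) = n+\ell$.
   Context: All graphs are finite and simple. $K_{1,m}$ denotes the star with $m$ edges. For graphs $F$, $H$, $G$, write $F \overset{\text{ind}}{\longrightarrow} (H,G)$ if for every coloring of the edges of $F$ with red and blue there is either a red induced copy of $H$ (a vertex set $S\subseteq V(F)$ with $F[S]\cong H$ and all edges of $F[S]$ red) or a blue induced copy of $G$ (defined analogously with blue). The induced Ramsey number $\mathrm{IR}(H,G)$ is the smallest number of vertices of a graph $F$ with $F \overset{\text{ind}}{\longrightarrow} (H,G)$. *)

From mathcomp Require Import all_boot.
Set Implicit Arguments. Unset Strict Implicit. Unset Printing Implicit Defensive.

Record sgraph := SGraph {
  vtx :> finType;
  adj : rel vtx;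
  adj_sym : symmetric adj;
  adj_irrefl : irreflexive adj }.

(* The star K_{1,m}: vertex 0 is the centre, adjacent to the m leaves 1..m. *)
Definition star_adj (m : nat) : rel 'I_m.+1 :=
  fun x y => ((val x == 0) && (val y != 0)) || ((val y == 0) && (val x != 0)).

Lemma star_adj_sym m : symmetric (star_adj (m:=m)).
Proof. by move=> x y; rewrite /star_adj orbC. Qed.

Lemma star_adj_irrefl m : irreflexive (star_adj (m:=m)).
Proof. by move=> x; rewrite /star_adj; case: (val x == 0). Qed.

Definition star (m : nat) : sgraph :=
  @SGraph 'I_m.+1 (@star_adj m) (@star_adj_sym m) (@star_adj_irrefl m).

(* A red/blue edge colouring of F: a symmetric function on pairs of vertices
   (only its values on edges matter); true = red, false = blue. *)
Definition coloring (F : sgraph) := { c : F -> F -> bool | forall x y, c x y = c y x }.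

Definition mono_induced_copy (H F : sgraph) (c : F -> F -> bool) (b : bool) : Prop :=
  exists f : H -> F,
    [/\ injective f,
        forall x y : H, adj (f x) (f y) = adj x y
      & forall x y : H, adj x y -> c (f x) (f y) = b].

Definition ind_arrows (F H G : sgraph) : Prop :=
  forall c : coloring F,
    mono_induced_copy H (sval c) true \/ mono_induced_copy G (sval c) false.

Definition IR_eq (H G : sgraph) (k : nat) : Prop :=
  (exists F : sgraph, #|F| = k /\ ind_arrows F H G) /\
  (forall F : sgraph, ind_arrows F H G -> k <= #|F|).

(* An induced monochromatic K_{1,k} is a vertex with k pairwise non-adjacent
   neighbours joined to it in one colour, so only the independence numbers of
   the monochromatic neighbourhoods matter.  In K_{1,n+l-1} the n+l-1 leaves are
   independent, so the centre sees l red or n blue ones.  Conversely, a graph on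
   fewer than n+l vertices is coloured by induction on its order: if some x has
   n independent neighbours J, then every neighbour of a vertex y of J lies
   outside J, so y has fewer than l independent neighbours; colour all edges at
   y red and colour the rest for (l-1, n).  Otherwise x itself plays the role of
   y with the colours exchanged. *)

From mathcomp Require Import all_boot zify.

Set Implicit Arguments. Unset Strict Implicit. Unset Printing Implicit Defensive.

Lemma star_adjE m (i j : star m) : adj i j = (i == ord0) (+) (j == ord0).
Proof. by rewrite /= /star_adj -!val_eqE /=; case: (val i == 0); case: (val j == 0). Qed.

Section Graph.
Variable F : sgraph.
Implicit Types (A B S W : {set F}) (c : rel F).

Definition stable S := [forall s in S, forall t in S, ~~ adj s t].

Lemma stableP S : reflect {in S &, forall s t, ~~ adj s t} (stable S).
Proof.
apply: (iffP forall_inP) => [h s t sS tS | h s sS]; first exact: (forall_inP (h s sS)).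
by apply/forall_inP => t tS; exact: h.
Qed.

Definition alpha A := \max_(S : {set F} | (S \subset A) && stable S) #|S|.

Lemma stable_leq_alpha A S : S \subset A -> stable S -> #|S| <= alpha A.
Proof. by move=> SA Sst; apply: leq_bigmax_cond; rewrite SA. Qed.

Lemma alpha_witness A : exists S, [/\ S \subset A, stable S & #|S| = alpha A].
Proof.
pose P S := (S \subset A) && stable S.
have P0 : P set0 by rewrite /P sub0set; apply/stableP => s t; rewrite inE.
rewrite /alpha (bigmax_eq_arg _ P0); case: arg_maxnP => // S /andP[SA Sst] _.
by exists S.
Qed.

Lemma alpha_subset A B : A \subset B -> alpha A <= alpha B.
Proof.
move=> AB; apply/bigmax_leqP => S /andP[SA Sst].
exact: stable_leq_alpha (subset_trans SA AB) Sst.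
Qed.

Lemma alpha_leq_card A : alpha A <= #|A|.
Proof. by apply/bigmax_leqP => S /andP[SA _]; exact: subset_leq_card. Qed.

Lemma alpha0 : alpha set0 = 0.
Proof. by apply/eqP; rewrite -leqn0 -(cards0 F) alpha_leq_card. Qed.

Lemma alpha_setD1 A y : alpha A <= (alpha (A :\ y)).+1.
Proof.
have [S [SA Sst <-]] := alpha_witness A.
have SyA : S :\ y \subset A :\ y by exact: setSD.
have Syst : stable (S :\ y).
  move/stableP: Sst => Sst.
  by apply/stableP => s t /setD1P[_ sS] /setD1P[_ tS]; exact: Sst.
have := stable_leq_alpha SyA Syst; have := cardsD1 y S; case: (y \in S) => /=; lia.
Qed.

Definition nbhd (v : F) := [set s | adj v s].

Definition mono_nbhd c (b : bool) (v : F) := [set s in nbhd v | c v s == b].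

Lemma card_mono_nbhd c v :
  #|mono_nbhd c true v| + #|mono_nbhd c false v| = #|nbhd v|.
Proof.
rewrite -(cardsID [set s | c v s] (nbhd v)).
by congr (_ + _); apply: eq_card => s; rewrite !inE; case: (c v s); rewrite ?andbT ?andbF.
Qed.

Definition star_free W c (b : bool) (k : nat) :=
  forall v, v \in W -> alpha (W :&: mono_nbhd c b v) < k.

Definition avoids_stars W c (l n : nat) :=
  star_free W c true l /\ star_free W c false n.

Definition swap_colors c : rel F := fun x y => ~~ c x y.

Lemma swap_colors_sym c : symmetric c -> symmetric (swap_colors c).
Proof. by move=> c_sym x y; rewrite /swap_colors c_sym. Qed.

Lemma mono_nbhd_swap c b v : mono_nbhd (swap_colors c) b v = mono_nbhd c (~~ b) v.
Proof. by apply/setP => s; rewrite !inE /swap_colors; case: b; case: (c v s). Qed.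

Lemma avoids_stars_swap W c l n :
  avoids_stars W c l n -> avoids_stars W (swap_colors c) n l.
Proof.
by case=> red blue; split => v vW; rewrite mono_nbhd_swap; [exact: blue | exact: red].
Qed.

Lemma avoids_stars_blue W l n : 0 < l -> #|W| <= n ->
  avoids_stars W (fun _ _ => false) l n.
Proof.
move=> l0 Wn; split => v vW.
  have -> : W :&: mono_nbhd (fun _ _ => false) true v = set0.
    by apply/setP => s; rewrite !inE /= !andbF.
  by rewrite alpha0.
have sub : W :&: mono_nbhd (fun _ _ => false) false v \subset W :\ v.
  apply/subsetP => s; rewrite !inE => /and3P[sW vs _]; rewrite sW andbT.
  by apply: contraTneq vs => ->; rewrite adj_irrefl.
have := leq_trans (alpha_subset sub) (alpha_leq_card _).
by have := cardsD1 v W; rewrite vW; lia.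
Qed.

Definition red_at c y : rel F := fun u v => [|| u == y, v == y | c u v].

Lemma red_at_sym c y : symmetric c -> symmetric (red_at c y).
Proof. by move=> c_sym u v; rewrite /red_at c_sym; case: (u == y); case: (v == y). Qed.

Lemma avoids_stars_red_at W c y l n :
  y \in W -> 0 < n -> alpha (W :&: nbhd y) < l ->
  avoids_stars (W :\ y) c l.-1 n -> avoids_stars W (red_at c y) l n.
Proof.
move=> yW n0 y_small [red blue]; split => v vW.
- have [->|vy] := eqVneq v y.
    apply: leq_ltn_trans y_small; apply/alpha_subset/setIS/subsetP => s.
    by rewrite !inE => /andP[].
  have sub : (W :&: mono_nbhd (red_at c y) true v) :\ y
             \subset (W :\ y) :&: mono_nbhd c true v.
    apply/subsetP => s; rewrite !inE /red_at (negbTE vy) => /and4P[sy sW vs].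
    by rewrite sy sW vs (negbTE sy).
  have := red v; rewrite !inE vy vW => /(_ isT).
  have := alpha_subset sub.
  have := alpha_setD1 (W :&: mono_nbhd (red_at c y) true v) y; lia.
- have [->|vy] := eqVneq v y.
    have -> : W :&: mono_nbhd (red_at c y) false y = set0.
      by apply/setP => s; rewrite !inE /red_at eqxx /= !andbF.
    by rewrite alpha0.
  have sub : W :&: mono_nbhd (red_at c y) false v
             \subset (W :\ y) :&: mono_nbhd c false v.
    apply/subsetP => s; rewrite !inE /red_at (negbTE vy) => /and3P[sW vs].
    by rewrite sW vs; case: (s == y).
  apply: leq_ltn_trans (alpha_subset sub) (blue v _).
  by rewrite !inE vy.
Qed.

Lemma exists_small_alpha W l n x : 0 < n -> #|W| < n + l ->
  n <= alpha (W :&: nbhd x) -> exists2 y, y \in W & alpha (W :&: nbhd y) < l.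
Proof.
move=> n0 Wnl; have [J [JN /stableP Jst <-]] := alpha_witness (W :&: nbhd x) => nJ.
have /card_gt0P [y yJ] : 0 < #|J| by lia.
have JW : J \subset W := subset_trans JN (subsetIl _ _).
exists y; first exact: subsetP JW y yJ.
have sub : W :&: nbhd y \subset W :\: J.
  apply/subsetP => s; rewrite !inE => /andP[sW ys]; rewrite sW andbT.
  by apply: contraTN ys => sJ; exact: Jst.
have := leq_trans (alpha_subset sub) (alpha_leq_card _).
have := subset_leq_card JW; rewrite cardsD (setIidPr JW); lia.
Qed.

Lemma avoiding_coloring W l n : 0 < l -> 0 < n -> #|W| < n + l ->
  exists2 c, symmetric c & avoids_stars W c l n.
Proof.
have [N] := ubnP #|W|; elim: N => // N IH in W l n *; rewrite ltnS => WN l0 n0 Wnl.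
have [Wn|nW] := leqP #|W| n.
  by exists (fun _ _ => false); last exact: avoids_stars_blue.
have [Wl|lW] := leqP #|W| l.
  exists (swap_colors (fun _ _ => false)); first exact: swap_colors_sym.
  exact/avoids_stars_swap/avoids_stars_blue.
have grow l' n' y : 1 < l' -> 0 < n' -> #|W| < n' + l' -> y \in W ->
    alpha (W :&: nbhd y) < l' -> exists2 c, symmetric c & avoids_stars W c l' n'.
  move=> l'1 n'0 Wnl' yW y_small; have := cardsD1 y W; rewrite yW /= => cardW.
  have [c c_sym c_av] : exists2 c, symmetric c & avoids_stars (W :\ y) c l'.-1 n'.
    by apply: IH; lia.
  by exists (red_at c y); [exact: red_at_sym | exact: avoids_stars_red_at].
have /card_gt0P [x xW] : 0 < #|W| by lia.
have [x_large|x_small] := leqP n (alpha (W :&: nbhd x)).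
  have [y yW y_small] := exists_small_alpha n0 Wnl x_large.
  by apply: (grow l n y) => //; lia.
have [c c_sym c_av] : exists2 c, symmetric c & avoids_stars W c n l.
  by apply: (grow n l x) => //; lia.
by exists (swap_colors c); [exact: swap_colors_sym | exact: avoids_stars_swap].
Qed.

Lemma alpha_of_mono_copy c b k :
  mono_induced_copy (star k) c b -> exists v, k <= alpha (mono_nbhd c b v).
Proof.
case=> f [f_inj f_adj f_col]; exists (f ord0).
have leaf_adj (i : star k) : i \in [set~ ord0] -> adj (ord0 : star k) i.
  by rewrite !inE star_adjE eqxx => /negbTE ->.
have := @stable_leq_alpha (mono_nbhd c b (f ord0)) (f @: [set~ ord0]).
rewrite card_imset // cardsC1 card_ord; apply.
  apply/subsetP => _ /imsetP[i /leaf_adj i_leaf ->].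
  by rewrite !inE f_adj i_leaf (f_col _ _ i_leaf) eqxx.
apply/stableP => _ _ /imsetP[i i_leaf ->] /imsetP[j j_leaf ->].
by move: i_leaf j_leaf; rewrite f_adj star_adjE !inE => /negbTE -> /negbTE ->.
Qed.

Lemma mono_copy_of_alpha c b v k : symmetric c ->
  k <= alpha (mono_nbhd c b v) -> mono_induced_copy (star k) c b.
Proof.
move=> c_sym; have [S [SN /stableP Sst <-]] := alpha_witness (mono_nbhd c b v) => kS.
pose g (j : 'I_k) := enum_val (widen_ord kS j).
have gS j : g j \in S by exact: enum_valP.
have gN j : adj v (g j) && (c v (g j) == b).
  by have := subsetP SN _ (gS j); rewrite !inE.
have g_inj : injective g.
  move=> i j /enum_val_inj /(congr1 val) /= ij; exact: val_inj.
have gv j : g j != v by apply: contraTneq (gN j) => ->; rewrite adj_irrefl.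
pose f (i : star k) := if unlift ord0 i is Some j then g j else v.
exists f; split.
- move=> i j; case: (unliftP ord0 i) => [i' ->|->]; case: (unliftP ord0 j) => [j' ->|->];
    rewrite /f ?liftK ?unlift_none //.
  + by move/g_inj ->.
  + by move/eqP; rewrite (negbTE (gv i')).
  + by move/esym/eqP; rewrite (negbTE (gv j')).
- move=> i j; rewrite star_adjE.
  case: (unliftP ord0 i) => [i' ->|->]; case: (unliftP ord0 j) => [j' ->|->];
    rewrite /f ?liftK ?unlift_none ?lift_eqF ?eqxx /=.
  + exact/negbTE/Sst.
  + by rewrite adj_sym; case/andP: (gN i').
  + by case/andP: (gN j').
  + exact: adj_irrefl.
- move=> i j; rewrite star_adjE.
  case: (unliftP ord0 i) => [i' ->|->]; case: (unliftP ord0 j) => [j' ->|->];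
    rewrite /f ?liftK ?unlift_none ?lift_eqF ?eqxx //= => _.
  + by rewrite c_sym; case/andP: (gN i') => _ /eqP.
  + by case/andP: (gN j') => _ /eqP.
Qed.

Lemma star_free_no_copy c b k :
  star_free setT c b k -> ~ mono_induced_copy (star k) c b.
Proof.
move=> free /alpha_of_mono_copy [v]; apply/negP; rewrite -ltnNge.
by rewrite -(setTI (mono_nbhd c b v)) free.
Qed.

End Graph.

Lemma star_ind_arrows m l n : l + n <= m.+1 -> ind_arrows (star m) (star l) (star n).
Proof.
move=> lnm [c c_sym] /=.
have centre_nbhd : nbhd (ord0 : star m) = [set~ ord0].
  by apply/setP => i; rewrite !inE star_adjE eqxx eq_sym.
have leaves_stable b : stable (mono_nbhd c b (ord0 : star m)).
  apply/stableP => i j; rewrite !inE !star_adjE eqxx /=.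
  by move=> /andP[/negbTE -> _] /andP[/negbTE -> _].
have alpha_leaves b :
    #|mono_nbhd c b (ord0 : star m)| <= alpha (mono_nbhd c b ord0).
  exact: stable_leq_alpha (subxx _) (leaves_stable b).
have := card_mono_nbhd c (ord0 : star m).
rewrite centre_nbhd cardsC1 card_ord => card_leaves.
have [red_large|red_small] := leqP l #|mono_nbhd c true (ord0 : star m)|.
  left; apply: (mono_copy_of_alpha c_sym).
  exact: leq_trans red_large (alpha_leaves true).
right; apply: (mono_copy_of_alpha c_sym); apply: leq_trans (alpha_leaves false); lia.
Qed.

Theorem lemma1 (l n : nat) : 0 < l -> 0 < n ->
  IR_eq (star l) (star n) (n + l).
Proof.
move=> l0 n0; split.
  exists (star (n + l).-1); split; first by rewrite card_ord; lia.
  by apply: star_ind_arrows; lia.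
move=> F arrows; rewrite leqNgt; apply/negP => small.
have [c c_sym [red blue]] : exists2 c, symmetric c & avoids_stars [set: F] c l n.
  by apply: avoiding_coloring; rewrite ?cardsT.
by case: (arrows (exist _ c c_sym)) => /=; apply: star_free_no_copy.
Qed.
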